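(* Let $K$ be a finite extension of $\mathbb Q_p$ with ring of integers $\mathcal O_K$ and residue field $\tilde K$, and let $f\in\mathcal O_K(x)$ be a rational map with good reduction. If $f$ has height zero, then every critical point of its reduction $\tilde f$ is the reduction of a critical point of $f$.
   Context: The height of $f$ is the largest integer $h\ge 0$ such that the reduction can be written $\tilde f(x)=\tilde Q(x^{p^h})$ for some rational function $\tilde Q$ over the residue field; $f$ has positive height if and only if the derivative of $\tilde f$ is identically zero. *)

From HB Require Import structures.
From mathcomp Require Import all_boot all_order all_algebra.
From mathcomp Require Import reals.
Set Implicit Arguments. Unset Strict Implicit. Unset Printing Implicit Defensive.
Import Order.TTheory GRing.Theory Num.Theory.
Local Open Scope ring_scope.

(* Setting.  K is the field, L an algebraic closure of K (embedding iota),   *)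
(* absv a (non-archimedean) absolute value on L, k the residue field of L    *)
(* (= an algebraic closure of the residue field of K) with reduction map     *)
(* red : O_L -> k.  The conditions [padic_setting] say that K, with the      *)
(* restricted absolute value, is a complete, discretely valued field of      *)
(* characteristic 0 with finite residue field of characteristic p, i.e. a   *)
(* finite extension of Q_p.                         *)

Record padic_setting (p : nat) (K : fieldType) (L : closedFieldType)
    (iota : {rmorphism K -> L}) (R : realType) (absv : L -> R)
    (k : fieldType) (red : L -> k) : Prop := PadicSetting {
  ps_prime : prime p;
  ps_char0 : [pchar K] =i pred0;
  ps_algebraic : forall x : L, exists q : {poly K}, q != 0 /\ root (map_poly iota q) x;
  ps_abs_ge0 : forall x, 0 <= absv x;
  ps_abs_eq0 : forall x, (absv x == 0) = (x == 0);
  ps_absM : forall x y, absv (x * y) = absv x * absv y;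
  ps_abs_ultra : forall x y, absv (x + y) <= Num.max (absv x) (absv y);
  (* residue characteristic p *)
  ps_abs_p : absv (p%:R) < 1;
  ps_discrete : exists pi : K, 0 < absv (iota pi) < 1 /\
      forall x : K, x != 0 -> exists n : int, absv (iota x) = absv (iota pi) ^ n;
  ps_complete : forall u : nat -> K,
      (forall e : R, 0 < e -> exists N : nat, forall m n : nat,
          (N <= m)%N -> (N <= n)%N -> absv (iota (u m - u n)) < e) ->
      exists l : K, forall e : R, 0 < e -> exists N : nat, forall n : nat,
          (N <= n)%N -> absv (iota (u n - l)) < e;
  ps_redD : forall x y, absv x <= 1 -> absv y <= 1 -> red (x + y) = red x + red y;
  ps_redM : forall x y, absv x <= 1 -> absv y <= 1 -> red (x * y) = red x * red y;
  ps_red1 : red 1 = 1;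
  ps_red_eq0 : forall x, absv x <= 1 -> (red x = 0 <-> absv x < 1);
  ps_red_surj : forall c : k, exists x, absv x <= 1 /\ red x = c;
  ps_res_finite : exists s : seq k, forall x : K, absv (iota x) <= 1 -> red (iota x) \in s
}.

Definition in_resK (K : fieldType) (L : closedFieldType) (iota : {rmorphism K -> L})
    (R : realType) (absv : L -> R) (k : fieldType) (red : L -> k) (c : k) : Prop :=
  exists x : K, absv (iota x) <= 1 /\ red (iota x) = c.

(* A rational map f = F/G (F, G coprime) ; its degree. *)
Definition rdeg (A : nzRingType) (F G : {poly A}) : nat := (maxn (size F) (size G)).-1.

(* Degree-d reversal: z^d F(1/z). *)
Definition hrev (A : nzRingType) (d : nat) (F : {poly A}) : {poly A} :=
  \poly_(i < d.+1) F`_(d - i).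

(* Critical points on P^1 (None = infinity) of the rational map F/G, where F, G
   are coprime: in local coordinates the derivative vanishes.  At a finite
   point a this is (F'G - FG')(a) = 0 (covering both f(a) finite, via f', and
   f(a) = infinity, via (1/f)'); at infinity one uses z |-> f(1/z) =
   hrev d F / hrev d G with d = deg f, at z = 0. *)
Definition is_crit (A : idomainType) (F G : {poly A}) (P : option A) : bool :=
  match P with
  | Some a => root (F^`() * G - F * G^`()) a
  | None => let d := rdeg F G in
            root ((hrev d F)^`() * hrev d G - hrev d F * (hrev d G)^`()) 0
  end.

Definition redP (L : fieldType) (R : realType) (absv : L -> R) (k : fieldType)
    (red : L -> k) (P : option L) : option k :=
  match P with
  | Some a => if absv a <= 1 then Some (red a) else None
  | None => None
  end.

(* F, G represent an element of O_K(x) in normalized form: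
   coprime, coefficients in O_K, some coefficient a unit. *)
Definition normalized_integral (K : fieldType) (L : closedFieldType)
    (iota : {rmorphism K -> L}) (R : realType) (absv : L -> R) (F G : {poly K}) : Prop :=
  [/\ coprimep F G,
      forall i, absv (iota F`_i) <= 1,
      forall i, absv (iota G`_i) <= 1
    & exists i, absv (iota F`_i) = 1 \/ absv (iota G`_i) = 1].

Definition redpoly (K : fieldType) (L : closedFieldType) (iota : {rmorphism K -> L})
    (k : fieldType) (red : L -> k) (F : {poly K}) : {poly k} :=
  map_poly (fun c => red (iota c)) F.

Definition redF (K : fieldType) (L : closedFieldType) (iota : {rmorphism K -> L})
    (k : fieldType) (red : L -> k) (F G : {poly K}) : {poly k} :=
  redpoly iota red F %/ gcdp (redpoly iota red F) (redpoly iota red G).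
Definition redG (K : fieldType) (L : closedFieldType) (iota : {rmorphism K -> L})
    (k : fieldType) (red : L -> k) (F G : {poly K}) : {poly k} :=
  redpoly iota red G %/ gcdp (redpoly iota red F) (redpoly iota red G).

Definition good_reduction (K : fieldType) (L : closedFieldType) (iota : {rmorphism K -> L})
    (k : fieldType) (red : L -> k) (F G : {poly K}) : Prop :=
  rdeg (redF iota red F G) (redG iota red F G) = rdeg F G.

Definition height_zero (p : nat) (K : fieldType) (L : closedFieldType)
    (iota : {rmorphism K -> L}) (R : realType) (absv : L -> R) (k : fieldType)
    (red : L -> k) (F G : {poly K}) : Prop :=
  forall h : nat, (0 < h)%N ->
    ~ exists Q1 Q2 : {poly k},
        [/\ forall i, in_resK iota absv red Q1`_i,
            forall i, in_resK iota absv red Q2`_i,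
            Q2 != 0
          & redF iota red F G * (Q2 \Po 'X^(p ^ h)) =
            redG iota red F G * (Q1 \Po 'X^(p ^ h))].

From HB Require Import structures.
From mathcomp Require Import all_boot all_order all_algebra.
From mathcomp Require Import reals.
From mathcomp Require Import ring lra zify.
Set Implicit Arguments. Unset Strict Implicit. Unset Printing Implicit Defensive.
Import Order.TTheory GRing.Theory Num.Theory.
Local Open Scope ring_scope.

(* Critical points of F/G are the roots of the Wronskian F'G - FG' (the point at
   infinity is handled by reversing F and G), and reduction commutes with taking
   Wronskians of integral polynomials.  Good reduction makes the reduced
   numerator and denominator a common nonzero multiple of those of f~, and height
   zero forbids both of their derivatives to vanish, so the reduced Wronskian is
   nonzero.  Every root c of a nonzero reduction of an integral V lifts to a root
   of V: otherwise V factors over the algebraically closed field as u times a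
   product of integral factors that are units at a lift b of c, and V(b)
   reducing to 0 forces |u| < 1, i.e. V reduces to 0.  A nonzero lift z of the
   critical point at infinity has |z| < 1, so 1/z is a finite critical point
   reducing to infinity.  Only the ultrametric absolute value and the residue
   map enter. *)

Definition wronsk (A : comNzRingType) (F G : {poly A}) : {poly A} :=
  F^`() * G - F * G^`().

Section Wronskian.
Variable A : comNzRingType.
Implicit Types F G : {poly A}.

Lemma wronskZ c F G : wronsk (c *: F) (c *: G) = (c * c) *: wronsk F G.
Proof. by rewrite /wronsk !derivZ -!mul_polyC polyCM; ring. Qed.

Lemma wronskC F G : wronsk G F = - wronsk F G.
Proof. by rewrite /wronsk; ring. Qed.

Lemma size_X_deriv F : (size ('X * F^`())%R <= size F)%N.
Proof.
have [->|F'0] := eqVneq F^`() 0; first by rewrite mulr0 size_poly0.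
have F0 : F != 0 by apply: contraNneq F'0 => ->; rewrite deriv0.
by rewrite mulrC size_mulX // lt_size_deriv.
Qed.

Lemma size_mul_leq_add m n F G : (size F <= m.+1)%N -> (size G <= n.+1)%N ->
  (size (F * G)%R <= (m + n).+1)%N.
Proof.
move=> sF sG; apply: leq_trans (size_polyMleq _ _) _.
by move: (size F) (size G) sF sG => a b; lia.
Qed.

Lemma size_X_wronsk n F G : (size F <= n.+1)%N -> (size G <= n.+1)%N ->
  (size ('X * wronsk F G)%R <= (n + n).+1)%N.
Proof.
move=> sF sG; have sF' := leq_trans (size_X_deriv F) sF.
have sG' := leq_trans (size_X_deriv G) sG.
have -> : 'X * wronsk F G = 'X * F^`() * G - F * ('X * G^`()).
  by rewrite /wronsk; ring.
apply: leq_trans (size_polyD _ _) _.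
by rewrite size_polyN geq_max !size_mul_leq_add.
Qed.

Lemma polyOver_wronsk (S : subringClosed A) :
  {in polyOver S &, forall F G, wronsk F G \is a polyOver S}.
Proof. by move=> F G SF SG; rewrite rpredB ?rpredM ?polyOver_deriv. Qed.

Lemma size_rdeg F G : (size F <= (rdeg F G).+1)%N && (size G <= (rdeg F G).+1)%N.
Proof. by rewrite /rdeg; move: (size F) (size G) => m n; apply/andP; split; lia. Qed.

End Wronskian.

Lemma wronsk_eq0_deriv (F : fieldType) (P Q : {poly F}) :
  coprimep P Q -> wronsk P Q = 0 -> P^`() = 0.
Proof.
move=> cPQ /eqP; rewrite subr_eq0 => /eqP eW.
have : P %| P^`() by rewrite -(Gauss_dvdpl _ cPQ) eW dvdp_mulr.
have [->|P0] := eqVneq P 0; first by rewrite deriv0.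
have [//|P'0 /(dvdp_leq P'0)] := eqVneq P^`() 0.
by rewrite leqNgt lt_size_deriv.
Qed.

Definition decimate (A : nzRingType) (p : nat) (P : {poly A}) : {poly A} :=
  \poly_(i < size P) P`_(i * p).

Lemma deriv_eq0_comp_Xn (F : fieldType) (p : nat) (P : {poly F}) :
  p \in [pchar F] -> P^`() = 0 -> P = decimate p P \Po 'X^p.
Proof.
move=> chp P'0; have p_gt0 := prime_gt0 (pcharf_prime chp).
apply/polyP => j; rewrite coef_comp_poly_Xn //.
case: ifP => [/dvdnP [m ->] | p_j].
  rewrite mulnK // coef_poly; case: ltnP => // le_P_m.
  by rewrite nth_default // (leq_trans le_P_m) // leq_pmulr.
have j_gt0 : (0 < j)%N by case: j p_j => //; rewrite dvdn0.
have /eqP := congr1 (fun q : {poly F} => q`_j.-1) P'0.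
rewrite /= coef_deriv prednK // coef0 -mulr_natr mulf_eq0 => /orP [/eqP //|].
by rewrite -(dvdn_pcharf chp) p_j.
Qed.

Section Reversal.
Variable A : comNzRingType.
Implicit Types P Q F G : {poly A}.

Lemma coef_hrev n P j : (hrev n P)`_j = if (j <= n)%N then P`_(n - j) else 0.
Proof. by rewrite /hrev coef_poly ltnS. Qed.

Lemma hrev_is_semilinear n : semilinear (@hrev A n).
Proof.
by split=> [a P|P Q]; apply/polyP => j;
  rewrite ?coefZ ?coefD !coef_hrev ?coefZ ?coefD; case: ifP; rewrite ?mulr0 ?addr0.
Qed.
HB.instance Definition _ n :=
  GRing.isSemilinear.Build A {poly A} {poly A} _ (@hrev A n) (hrev_is_semilinear n).

Lemma hrevXn n i : (i <= n)%N -> hrev n ('X^i : {poly A}) = 'X^(n - i).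
Proof.
move=> le_i_n; apply/polyP => j; rewrite coef_hrev !coefXn.
case: leqP => le_j_n.
  by rewrite (_ : (n - j == i)%N = (j == n - i)%N) //; apply/eqP/eqP; lia.
by rewrite (_ : (j == n - i)%N = false) //; apply/eqP; lia.
Qed.

Lemma poly_coef_wide n P : (size P <= n)%N -> P = \sum_(i < n) P`_i *: 'X^i.
Proof. by move=> sP; rewrite -poly_def -/(take_poly n P) take_poly_id. Qed.

Lemma hrev_coef_wide n P : (size P <= n.+1)%N ->
  hrev n P = \sum_(i < n.+1) P`_i *: 'X^(n - i).
Proof.
move=> sP; rewrite {1}(poly_coef_wide sP) linear_sum; apply: eq_bigr => i _.
by rewrite linearZ /= hrevXn // -ltnS.
Qed.

Lemma hrevM n P Q : (size P <= n.+1)%N -> (size Q <= n.+1)%N ->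
  hrev (n + n) (P * Q) = hrev n P * hrev n Q.
Proof.
move=> sP sQ; rewrite (hrev_coef_wide sP) (hrev_coef_wide sQ).
rewrite {1}(poly_coef_wide sP) {1}(poly_coef_wide sQ) !big_distrl linear_sum /=.
apply: eq_bigr => i _; rewrite !big_distrr linear_sum /=; apply: eq_bigr => j _.
have [lt_i lt_j] := (ltn_ord i, ltn_ord j).
rewrite -!scalerAl -!scalerAr !scalerA linearZ /= -!exprD hrevXn; last by lia.
by congr (_ *: 'X^_); lia.
Qed.

Lemma X_deriv_hrev n F : 'X * (hrev n F)^`() = hrev n F *+ n - hrev n ('X * F^`()).
Proof.
apply/polyP => j; rewrite coefXM coefB coefMn !coef_hrev coefXM.
case: (posnP j) => [->|j_gt0].
  by case: n => [|n] /=; rewrite ?mulr0n ?subrr // coef_deriv subn0 subrr.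
rewrite coef_deriv prednK // coef_hrev; case: leqP => [le_j_n|]; last by rewrite !mul0rn subr0.
case: (posnP (n - j)) => [nj0|nj_gt0]; first by rewrite subr0; congr (_ *+ _); lia.
rewrite coef_deriv prednK // -mulrnBr ?leq_subr // subKn //.
Qed.

(* The factor 'X spares us the cancellation of leading terms that bounds the
   degree of the Wronskian by 2n - 2. *)
Lemma X_wronsk_hrev n F G : (size F <= n.+1)%N -> (size G <= n.+1)%N ->
  'X * wronsk (hrev n F) (hrev n G) = - hrev (n + n) ('X * wronsk F G).
Proof.
move=> sF sG; have sF' := leq_trans (size_X_deriv F) sF.
have sG' := leq_trans (size_X_deriv G) sG.
have -> : 'X * wronsk (hrev n F) (hrev n G) =
    'X * (hrev n F)^`() * hrev n G - hrev n F * ('X * (hrev n G)^`()).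
  by rewrite /wronsk; ring.
have -> : 'X * wronsk F G = 'X * F^`() * G - F * ('X * G^`()) by rewrite /wronsk; ring.
by rewrite !X_deriv_hrev linearB /= !hrevM //; ring.
Qed.

Lemma hrev_eq0 n P : (size P <= n.+1)%N -> hrev n P = 0 -> P = 0.
Proof.
move=> sP P0; apply/polyP => j; rewrite coef0.
have [le_j_n|lt_n_j] := leqP j n; last by rewrite nth_default // (leq_trans sP).
have := congr1 (fun q : {poly A} => q`_(n - j)) P0.
by rewrite /= coef_hrev coef0 leq_subr subKn.
Qed.

Lemma polyOver_hrev (S : addrClosed A) n :
  {in polyOver S, forall P, hrev n P \is a polyOver S}.
Proof. by move=> P /polyOverP SP; apply: polyOver_poly => i _. Qed.

End Reversal.

Lemma hrev_horner (F : fieldType) n (P : {poly F}) z : z != 0 ->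
  (size P <= n.+1)%N -> (hrev n P).[z] = z ^+ n * P.[z^-1].
Proof.
move=> z0 sP; rewrite hrev_coef_wide // (horner_coef_wide _ sP) horner_sum mulr_sumr.
apply: eq_bigr => i _; rewrite hornerZ hornerXn exprVn mulrCA; congr (_ * _).
by rewrite exprB ?unitfE // -ltnS.
Qed.

Lemma wronsk_hrev_neq0 (F : fieldType) n (P Q : {poly F}) :
  (size P <= n.+1)%N -> (size Q <= n.+1)%N ->
  wronsk P Q != 0 -> wronsk (hrev n P) (hrev n Q) != 0.
Proof.
move=> sP sQ; apply: contra_neq => W0.
have /eqP := X_wronsk_hrev sP sQ; rewrite W0 mulr0 eq_sym oppr_eq0 => /eqP XW0.
by move: (hrev_eq0 (size_X_wronsk sP sQ) XW0) => /eqP; rewrite mulf_eq0 polyX_eq0 => /eqP.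
Qed.

Lemma root_wronsk_hrev (F : fieldType) n (P Q : {poly F}) z :
  z != 0 -> (size P <= n.+1)%N -> (size Q <= n.+1)%N ->
  root (wronsk (hrev n P) (hrev n Q)) z -> root (wronsk P Q) z^-1.
Proof.
move=> z0 sP sQ /rootP Hz; have := congr1 (horner^~ z) (X_wronsk_hrev sP sQ).
rewrite /= hornerM Hz mulr0 hornerN (hrev_horner z0 (size_X_wronsk sP sQ)).
move/eqP; rewrite eq_sym oppr_eq0 hornerM hornerX !mulf_eq0 expf_eq0 invr_eq0.
by rewrite (negbTE z0) andbF.
Qed.

Lemma is_critZ (A : idomainType) c (F G : {poly A}) P : c != 0 ->
  is_crit (c *: F) (c *: G) P = is_crit F G P.
Proof.
move=> c0; have cc0 : c * c != 0 by rewrite mulf_neq0.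
case: P => [a|] /=; first by rewrite -[_ - _]/(wronsk _ _) wronskZ rootZ.
by rewrite /rdeg !size_scale // -[_ - _]/(wronsk _ _) !linearZ /= wronskZ rootZ.
Qed.

Definition integral (L : Type) (R : numDomainType) (absv : L -> R) : pred L :=
  fun x => absv x <= 1.

Record nonarch_reduction (L : nzRingType) (R : realFieldType) (absv : L -> R)
    (k : nzRingType) (red : L -> k) : Prop := NonarchReduction {
  absv_ge0 : forall x, 0 <= absv x;
  absv_eq0 : forall x, (absv x == 0) = (x == 0);
  absvM : {morph absv : x y / x * y};
  absv_ultra : forall x y, absv (x + y) <= Num.max (absv x) (absv y);
  redD : {in integral absv &, {morph red : x y / x + y}};
  redM : {in integral absv &, {morph red : x y / x * y}};
  red1 : red 1 = 1;
  red_eq0 : {in integral absv, forall x, red x = 0 <-> absv x < 1};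
  red_surj : forall c, exists2 x, x \in integral absv & red x = c
}.

Section NonarchReduction.
Variables (L : fieldType) (R : realFieldType) (absv : L -> R) (k : fieldType).
Variable red : L -> k.
Hypothesis hv : nonarch_reduction absv red.

Lemma absv0 : absv 0 = 0.
Proof. by apply/eqP; rewrite (absv_eq0 hv). Qed.

Lemma absv1 : absv 1 = 1.
Proof.
have : absv 1 * absv 1 = absv 1 * 1 by rewrite -(absvM hv) !mulr1.
by apply: mulfI; rewrite (absv_eq0 hv) oner_eq0.
Qed.

Lemma absvN x : absv (- x) = absv x.
Proof.
have absvN1 : absv (-1) = 1.
  have : absv (-1) * absv (-1) = 1 by rewrite -(absvM hv) mulrNN mulr1 absv1.
  by have := absv_ge0 hv (-1); nra.
by rewrite -mulN1r (absvM hv) absvN1 mul1r.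
Qed.

Lemma absvV x : x != 0 -> absv x^-1 = (absv x)^-1.
Proof.
move=> x0; apply: (@mulfI _ (absv x)); first by rewrite (absv_eq0 hv).
by rewrite -(absvM hv) !mulfV ?absv1 ?(absv_eq0 hv).
Qed.

Lemma absvD_dominant x y : absv y < absv x -> absv (x + y) = absv x.
Proof.
move=> lt_yx; apply/eqP; rewrite eq_le; apply/andP; split.
  by rewrite (le_trans (absv_ultra hv x y)) // ge_max lexx ltW.
have := absv_ultra hv (x + y) (- y); rewrite addrK absvN le_max.
by case/orP => [//|/(lt_le_trans lt_yx)]; rewrite ltxx.
Qed.

Fact integral_subring_closed : subring_closed (integral absv).
Proof.
split=> [|x y|x y]; rewrite !unfold_in /= ?absv1 // => x1 y1.
  by rewrite (le_trans (absv_ultra hv _ _)) // ge_max x1 absvN.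
by rewrite (absvM hv) -(mulr1 1) ler_pM ?(absv_ge0 hv).
Qed.
(* The instance depends on [hv], so it is local and declared again below. *)
#[local] HB.instance Definition _ :=
  GRing.isSubringClosed.Build L (integral absv) integral_subring_closed.

Lemma red0 : red 0 = 0.
Proof.
have i0 : 0 \in integral absv by rewrite rpred0.
have := redD hv i0 i0.
by rewrite addr0 => /esym/eqP; rewrite -subr_eq0 addrK => /eqP.
Qed.

Lemma redN : {in integral absv, {morph red : x / - x}}.
Proof.
move=> x x1; have Nx1 : - x \in integral absv by rewrite rpredN.
have := redD hv x1 Nx1; rewrite subrr red0 => /esym/eqP.
by rewrite addrC addr_eq0 => /eqP.
Qed.

Lemma redB : {in integral absv &, {morph red : x y / x - y}}.
Proof. by move=> x y x1 y1; rewrite (redD hv) ?rpredN // redN. Qed.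

Lemma red_sum (I : Type) (r : seq I) (P : pred I) (f : I -> L) :
  (forall i, P i -> f i \in integral absv) ->
  red (\sum_(i <- r | P i) f i) = \sum_(i <- r | P i) red (f i).
Proof.
move=> f1; suff [] : (\sum_(i <- r | P i) f i \in integral absv) /\
   red (\sum_(i <- r | P i) f i) = \sum_(i <- r | P i) red (f i) by [].
apply: (big_ind2 (fun x y => x \in integral absv /\ red x = y)).
- by rewrite rpred0 red0.
- by move=> x1 x2 y1 y2 [i1 <-] [i2 <-]; rewrite rpredD // (redD hv).
- by move=> i Pi; rewrite f1.
Qed.

Lemma red_mulrn x n : x \in integral absv -> red (x *+ n) = red x *+ n.
Proof.
move=> x1; elim: n => [|n IHn]; first exact: red0.
by rewrite !mulrS (redD hv) ?rpredMn // IHn.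
Qed.

Lemma red_natr n : red n%:R = n%:R.
Proof. by rewrite red_mulrn ?rpred1 // (red1 hv). Qed.

Lemma redX x n : x \in integral absv -> red (x ^+ n) = red x ^+ n.
Proof.
move=> x1; elim: n => [|n IHn]; first exact: (red1 hv).
by rewrite !exprS (redM hv) ?rpredX // IHn.
Qed.

Definition redp (V : {poly L}) : {poly k} := map_poly red V.

Lemma coef_redp V i : (redp V)`_i = red V`_i.
Proof. by rewrite coef_map_id0 // red0. Qed.

Lemma size_redp V : (size (redp V) <= size V)%N.
Proof. exact: size_poly. Qed.

Lemma redp_hrev n V : redp (hrev n V) = hrev n (redp V).
Proof.
by apply/polyP => i; rewrite coef_redp !coef_hrev; case: ifP; rewrite ?coef_redp ?red0.
Qed.

Lemma redpB U V : U \is a polyOver (integral absv) -> V \is a polyOver (integral absv) ->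
  redp (U - V) = redp U - redp V.
Proof.
move=> /polyOverP U1 /polyOverP V1.
by apply/polyP => i; rewrite coefB !coef_redp coefB redB.
Qed.

Lemma redpM U V : U \is a polyOver (integral absv) -> V \is a polyOver (integral absv) ->
  redp (U * V) = redp U * redp V.
Proof.
move=> /polyOverP U1 /polyOverP V1.
apply/polyP => i; rewrite coef_redp !coefM red_sum => [|j _]; last exact: rpredM.
by apply: eq_bigr => j _; rewrite !coef_redp (redM hv).
Qed.

Lemma redp_deriv U : U \is a polyOver (integral absv) -> redp U^`() = (redp U)^`().
Proof.
move=> /polyOverP U1.
by apply/polyP => i; rewrite coef_redp !coef_deriv red_mulrn ?coef_redp.
Qed.

Lemma horner_redp U x : U \is a polyOver (integral absv) -> x \in integral absv ->
  red U.[x] = (redp U).[red x].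
Proof.
move=> /polyOverP U1 x1.
rewrite (horner_coef_wide x (leqnn (size U))) (horner_coef_wide _ (size_redp U)).
rewrite red_sum => [|i _]; last by rewrite rpredM ?rpredX.
by apply: eq_bigr => i _; rewrite (redM hv) ?rpredX ?redX ?coef_redp.
Qed.

Lemma redp_wronsk U V : U \is a polyOver (integral absv) ->
  V \is a polyOver (integral absv) -> redp (wronsk U V) = wronsk (redp U) (redp V).
Proof.
move=> U1 V1; have [U'1 V'1] := (polyOver_deriv U1, polyOver_deriv V1).
by rewrite /wronsk redpB ?rpredM // !redpM // !redp_deriv.
Qed.

End NonarchReduction.

Section RootLift.
Variables (L : closedFieldType) (R : realType) (absv : L -> R) (k : fieldType).
Variable red : L -> k.
Hypothesis hv : nonarch_reduction absv red.

Let integral_subring : subring_closed (integral absv) := integral_subring_closed hv.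
HB.instance Definition _ :=
  GRing.isSubringClosed.Build L (integral absv) integral_subring.

Lemma XsubC_unit_factor b r : b \in integral absv ->
  ~~ ((r \in integral absv) && (red r == red b)) ->
  exists s q, [/\ 'X - r%:P = s *: q, q \is a polyOver (integral absv) & absv q.[b] = 1].
Proof.
move=> b1; have [r1 /= neq_rb | r_not1 _] := boolP (r \in integral absv).
  exists 1, ('X - r%:P); rewrite scale1r polyOverXsubC hornerXsubC; split => //.
  have br1 : b - r \in integral absv by rewrite rpredB.
  apply/eqP; rewrite eq_le (br1 : absv (b - r) <= 1) leNgt.
  apply: contra neq_rb => /(red_eq0 hv br1).2/eqP.
  by rewrite (redB hv) // subr_eq0 eq_sym.
have r_gt1 : 1 < absv r by rewrite ltNge.
have r0 : r != 0 by apply: contraTneq r_gt1 => ->; rewrite (absv0 hv) ltr10.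
exists (- r), (1 - r^-1 *: 'X); split.
- by rewrite scalerBr scalerA mulNr mulfV // scaleN1r opprK -mul_polyC mulr1 polyCN addrC.
- rewrite rpredB ?rpred1 ?polyOverZ ?polyOverX //.
  by rewrite unfold_in /= (absvV hv) // invf_le1 ?ltW // (lt_trans ltr01).
rewrite !hornerE (absvD_dominant hv) (absv1 hv) // (absvN hv) (absvM hv) (absvV hv) //.
have r_inv_lt1 : (absv r)^-1 < 1 by rewrite invf_lt1 // (lt_trans ltr01).
by apply: le_lt_trans r_inv_lt1; rewrite ler_piMr ?invr_ge0 ?(absv_ge0 hv).
Qed.

Lemma prod_XsubC_unit_factor b rs : b \in integral absv ->
  ~~ has (fun r => (r \in integral absv) && (red r == red b)) rs ->
  exists s q, [/\ \prod_(r <- rs) ('X - r%:P) = s *: q,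
                  q \is a polyOver (integral absv) & absv q.[b] = 1].
Proof.
move=> b1; elim: rs => [|r rs IHrs] /=.
  by exists 1, 1; rewrite big_nil scale1r rpred1 hornerC (absv1 hv).
rewrite negb_or => /andP [/(XsubC_unit_factor b1) [s1 [q1 [defq1 q1_1 q1b]]]].
case/IHrs => s2 [q2 [defq2 q2_1 q2b]].
exists (s1 * s2), (q1 * q2); split.
- by rewrite big_cons defq1 defq2 -scalerAl -scalerAr scalerA.
- exact: rpredM.
by rewrite hornerM (absvM hv) q1b q2b mulr1.
Qed.

Lemma redp_scale_eq0 u q b : b \in integral absv ->
  q \is a polyOver (integral absv) -> absv q.[b] = 1 ->
  u *: q \is a polyOver (integral absv) -> (redp red (u *: q)).[red b] = 0 ->
  redp red (u *: q) = 0.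
Proof.
move=> b1 q1 qb uq1; rewrite -(horner_redp hv) // => /(red_eq0 hv (rpred_horner uq1 b1)).
rewrite hornerZ (absvM hv) qb mulr1 => u_lt1.
apply/polyP => i; rewrite (coef_redp hv) coef0 coefZ.
have uqi1 : u * q`_i \in integral absv by rewrite -coefZ (polyOverP uq1).
apply/(red_eq0 hv uqi1); rewrite (absvM hv); apply: le_lt_trans u_lt1.
by rewrite ler_piMr ?(absv_ge0 hv) //; apply: (polyOverP q1).
Qed.

Lemma root_lift V c : V \is a polyOver (integral absv) ->
  redp red V != 0 -> root (redp red V) c ->
  exists2 a, a \in integral absv & red a = c /\ root V a.
Proof.
move=> V1 rV0 /rootP rVc; have [b b1 bc] := red_surj hv c; rewrite -{}bc in rVc *.
have V0 : V != 0 by apply: contraNneq rV0 => ->; rewrite /redp map_poly0.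
have [rs defV] := closed_field_poly_normal V.
have [/hasP [r r_rs /andP [r1 /eqP rb]] | no_lift] :=
  boolP (has (fun r => (r \in integral absv) && (red r == red b)) rs).
  exists r => //; split => //.
  by rewrite defV rootZ ?lead_coef_eq0 // root_prod_XsubC.
have [s [q [defq q1 qb]]] := prod_XsubC_unit_factor b1 no_lift.
rewrite defV defq scalerA in V1 rV0 rVc.
by rewrite (redp_scale_eq0 b1 q1 qb V1 rVc) eqxx in rV0.
Qed.

Lemma crit_lift F G :
  F \is a polyOver (integral absv) -> G \is a polyOver (integral absv) ->
  rdeg (redp red F) (redp red G) = rdeg F G ->
  wronsk (redp red F) (redp red G) != 0 ->
  forall P, is_crit (redp red F) (redp red G) P ->
  exists Q, is_crit F G Q /\ redP absv red Q = P.
Proof.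
move=> F1 G1 deg_red W0 [c|] /= crit.
  have [a a1 [ac Wa]] : exists2 a, a \in integral absv & red a = c /\ root (wronsk F G) a.
    by apply: root_lift; rewrite ?polyOver_wronsk ?(redp_wronsk hv).
  by exists (Some a); rewrite /= (a1 : absv a <= 1) ac.
rewrite deg_red in crit; set d := rdeg F G in crit *.
have /andP [sF sG] := size_rdeg F G; rewrite -/d in sF sG.
have [sFr sGr] := (leq_trans (size_redp red F) sF, leq_trans (size_redp red G) sG).
have H1 : wronsk (hrev d F) (hrev d G) \is a polyOver (integral absv).
  by rewrite polyOver_wronsk ?polyOver_hrev.
have redH : redp red (wronsk (hrev d F) (hrev d G)) =
    wronsk (hrev d (redp red F)) (hrev d (redp red G)).
  by rewrite (redp_wronsk hv) ?polyOver_hrev // !(redp_hrev hv).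
have [z z1 [z0 Hz]] : exists2 z, z \in integral absv &
    red z = 0 /\ root (wronsk (hrev d F) (hrev d G)) z.
  by apply: root_lift H1 _ _; rewrite redH ?wronsk_hrev_neq0.
have [z_eq0|z_neq0] := eqVneq z 0; first by rewrite z_eq0 in Hz; exists None.
exists (Some z^-1); split; first exact: root_wronsk_hrev Hz.
have z_lt1 : absv z < 1 := (red_eq0 hv z1).1 z0.
have z_gt0 : 0 < absv z by rewrite lt_def (absv_eq0 hv) z_neq0 (absv_ge0 hv).
by rewrite /= (absvV hv) // invf_le1 // leNgt z_lt1.
Qed.

End RootLift.

Lemma padic_nonarch_reduction p (K : fieldType) (L : closedFieldType)
    (iota : {rmorphism K -> L}) (R : realType) (absv : L -> R) (k : fieldType)
    (red : L -> k) :
  padic_setting p iota absv red -> nonarch_reduction absv red.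
Proof.
case=> _ _ _ ge0 eq0 absvM ultra _ _ _ redD redM red1 red_eq0 surj _.
by split=> // c; have [x [x1 <-]] := surj c; exists x.
Qed.

Section PadicReduction.
Variables (p : nat) (K : fieldType) (L : closedFieldType) (iota : {rmorphism K -> L}).
Variables (R : realType) (absv : L -> R) (k : fieldType) (red : L -> k).
Hypothesis ps : padic_setting p iota absv red.

Let hv := padic_nonarch_reduction ps.

Lemma padic_pchar_residue : p \in [pchar k].
Proof.
have p1 : p%:R \in integral absv := ltW (ps_abs_p ps).
rewrite inE (ps_prime ps) -(red_natr hv); apply/eqP/(red_eq0 hv p1).
exact: ps_abs_p ps.
Qed.

Lemma coef_redpoly (H : {poly K}) i : (redpoly iota red H)`_i = red (iota H`_i).
Proof. by rewrite coef_map_id0 // rmorph0 (red0 hv). Qed.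

Lemma redp_map (H : {poly K}) : redp red (map_poly iota H) = redpoly iota red H.
Proof. by apply/polyP => i; rewrite (coef_redp hv) coef_map coef_redpoly. Qed.

Lemma map_polyOver_integral (H : {poly K}) : (forall i, absv (iota H`_i) <= 1) ->
  map_poly iota H \is a polyOver (integral absv).
Proof. by move=> H1; apply: polyOver_poly => i _; apply: H1. Qed.

Lemma in_resK_redpoly (H : {poly K}) i : (forall j, absv (iota H`_j) <= 1) ->
  in_resK iota absv red (redpoly iota red H)`_i.
Proof. by move=> H1; exists H`_i; rewrite coef_redpoly. Qed.

Lemma in_resK_poly n (E : nat -> k) :
  (forall j, in_resK iota absv red (E j)) -> forall i, in_resK iota absv red (\poly_(j < n) E j)`_i.
Proof.
move=> E1 i; rewrite coef_poly; case: ifP => _ //.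
by exists 0; rewrite rmorph0 (absv0 hv) ler01 (red0 hv).
Qed.

Variables F G : {poly K}.
Hypotheses (FG1 : normalized_integral iota absv F G) (deg_gt0 : (0 < rdeg F G)%N).
Hypothesis good : good_reduction iota red F G.

Lemma redpoly_neq0 : (redpoly iota red F != 0) || (redpoly iota red G != 0).
Proof.
have [_ _ _ [i unit_i]] := FG1.
have red_unit x : absv x = 1 -> red x != 0.
  move=> x1; have x_int : x \in integral absv by rewrite unfold_in /= x1.
  by apply/eqP => /(red_eq0 hv x_int); rewrite x1 ltxx.
apply/orP; case: unit_i => /red_unit; rewrite -coef_redpoly => unit_i; [left|right];
  by apply: contraNneq unit_i => ->; rewrite coef0.
Qed.

Lemma good_reduction_scale : exists2 c, c != 0 &
  redpoly iota red F = c *: redF iota red F G /\ redpoly iota red G = c *: redG iota red F G.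
Proof.
rewrite /redF /redG; set Ft := redpoly iota red F; set Gt := redpoly iota red G.
set g := gcdp Ft Gt; have g0 : g != 0 by rewrite gcdp_eq0 negb_and redpoly_neq0.
have size_g : size g == 1%N.
  have [sFt sGt] : (size Ft <= size F)%N /\ (size Gt <= size G)%N by rewrite !size_poly.
  have := good; rewrite /good_reduction /rdeg /redF /redG -/Ft -/Gt -/g !size_divp //.
  move: deg_gt0 (size_poly_gt0 g); rewrite /rdeg g0.
  by move: (size g) (size Ft) (size Gt) (size F) (size G) sFt sGt => *; apply/eqP; lia.
have [c c0 defg] := size_poly1P g size_g.
by exists c => //; split; rewrite -mul_polyC -defg mulrC divpK ?dvdp_gcdl ?dvdp_gcdr.
Qed.

Lemma redG_neq0 : redG iota red F G != 0.
Proof.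
apply/eqP => G0; have := coprimep_div_gcd redpoly_neq0.
rewrite -/(redF _ _ F G) -/(redG _ _ F G) G0 coprimep0 => /eqp_size size_F.
by move: good deg_gt0; rewrite /good_reduction /rdeg G0 size_F size_poly1 size_poly0 => <-.
Qed.

Lemma reduction_wronsk_neq0 : height_zero p iota absv red F G ->
  wronsk (redF iota red F G) (redG iota red F G) != 0.
Proof.
move=> hz; have [c c0 [defF defG]] := good_reduction_scale.
have cop := coprimep_div_gcd redpoly_neq0; have chp := padic_pchar_residue.
apply/eqP => W0.
have dF : (redpoly iota red F)^`() = 0 by rewrite defF derivZ (wronsk_eq0_deriv cop W0) scaler0.
have dG : (redpoly iota red G)^`() = 0.
  rewrite defG derivZ (@wronsk_eq0_deriv _ _ (redF iota red F G)) ?scaler0 //.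
    by rewrite coprimep_sym.
  by rewrite wronskC W0 oppr0.
apply: (hz 1%N isT); rewrite expn1; have [_ F1 G1 _] := FG1.
exists (decimate p (redpoly iota red F)), (decimate p (redpoly iota red G)); split.
- by rewrite /decimate; apply: in_resK_poly => j; apply: in_resK_redpoly F1.
- by rewrite /decimate; apply: in_resK_poly => j; apply: in_resK_redpoly G1.
- apply: contraNneq redG_neq0 => Q0; have := deriv_eq0_comp_Xn chp dG.
  by rewrite Q0 comp_poly0 defG => /eqP; rewrite scaler_eq0 (negbTE c0).
by rewrite -!(deriv_eq0_comp_Xn chp) // defF defG -!scalerAr mulrC.
Qed.

End PadicReduction.

Theorem proposition3p6 (p : nat) (K : fieldType) (L : closedFieldType)
    (iota : {rmorphism K -> L}) (R : realType) (absv : L -> R)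
    (k : fieldType) (red : L -> k) (F G : {poly K}) :
  padic_setting p iota absv red ->
  normalized_integral iota absv F G ->
  (0 < rdeg F G)%N ->
  good_reduction iota red F G ->
  height_zero p iota absv red F G ->
  forall P : option k,
    is_crit (redF iota red F G) (redG iota red F G) P ->
    exists Q : option L,
      is_crit (map_poly iota F) (map_poly iota G) Q /\ redP absv red Q = P.
Proof.
move=> ps FG1 deg_gt0 good hz P crit.
have hv := padic_nonarch_reduction ps.
have [_ F1 G1 _] := FG1.
have [c c0 [defF defG]] := good_reduction_scale ps FG1 deg_gt0 good.
apply: (crit_lift hv (map_polyOver_integral F1) (map_polyOver_integral G1));
  rewrite !(redp_map ps) defF defG.
- by rewrite /rdeg !size_scale // !size_map_poly; exact: good.
- by rewrite wronskZ scaler_eq0 negb_or mulf_neq0 // (reduction_wronsk_neq0 ps).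
by rewrite is_critZ.
Qed.
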